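(* Let $(P,\cdot)$ be a strong order-preserving partial action of a monoid $T$ on a poset $P$. Then there is a globalisation $(\iota,\mathbf{P},\diamond)$ of $(P,\cdot)$ such that $\mathbf{P}$ is a poset, $\iota:P\to\mathbf{P}$ is an order-embedding whose image $P\iota$ is an order ideal of $\mathbf{P}$, and $(\mathbf{P},\diamond)$ is an order-preserving (total) action of $T$.
   Context: A partial action of a monoid $T$ on a set $X$ is a partial map $T\times X\to X$, $(t,x)\mapsto t\cdot x$, such that $1\cdot x$ is defined and equals $x$ for all $x$, and whenever $t\cdot x$ and $s\cdot(t\cdot x)$ are defined, $st\cdot x$ is defined and $s\cdot(t\cdot x)=st\cdot x$. It is an action if $t\cdot x$ is always defined. It is strong if whenever $t\cdot x$ and $st\cdot x$ are defined, $s\cdot(t\cdot x)$ is defined. A (partial) action on a poset is order-preserving if whenever $x\le y$ and $t\cdot y$ is defined, $t\cdot x$ is defined and $t\cdot x\le t\cdot y$. A globalisation of a partial action $(X,\cdot)$ of $T$ is a triple $(\iota,\mathbf{X},\ast)$ with $\iota:X\to\mathbf{X}$ injective and $(\mathbf{X},\ast)$ an action of $T$ such that for all $t\in T$, $x\in X$: $t\cdot x$ is defined iff $t\ast x\iota\in X\iota$, and in that case $(t\cdot x)\iota=t\ast x\iota$. An order ideal of a poset is a down-closed subset. *)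

From Stdlib Require Import Relations.

Record is_monoid (T : Type) (mul : T -> T -> T) (one : T) : Prop := {
  mon_assoc : forall a b c, mul a (mul b c) = mul (mul a b) c;
  mon_one_l : forall a, mul one a = a;
  mon_one_r : forall a, mul a one = a }.

Record is_poset (X : Type) (le : X -> X -> Prop) : Prop := {
  po_refl : forall x, le x x;
  po_antisym : forall x y, le x y -> le y x -> x = y;
  po_trans : forall x y z, le x y -> le y z -> le x z }.

(* Partial action: act t x = Some y  means  t . x is defined and equals y. *)
Definition is_partial_action {T X : Type} (mul : T -> T -> T) (one : T)
  (act : T -> X -> option X) : Prop :=
  (forall x, act one x = Some x) /\
  (forall s t x y z, act t x = Some y -> act s y = Some z -> act (mul s t) x = Some z).

Definition is_strong {T X : Type} (mul : T -> T -> T) (act : T -> X -> option X) : Prop :=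
  forall s t x y w, act t x = Some y -> act (mul s t) x = Some w ->
    exists z, act s y = Some z.

Definition order_preserving_pact {T X : Type} (le : X -> X -> Prop)
  (act : T -> X -> option X) : Prop :=
  forall t x y y', le x y -> act t y = Some y' ->
    exists x', act t x = Some x' /\ le x' y'.

Definition is_action {T X : Type} (mul : T -> T -> T) (one : T) (act : T -> X -> X) : Prop :=
  (forall x, act one x = x) /\ (forall s t x, act s (act t x) = act (mul s t) x).

Definition order_preserving_action {T X : Type} (le : X -> X -> Prop) (act : T -> X -> X) : Prop :=
  forall t x y, le x y -> le (act t x) (act t y).

Definition is_globalisation {T X XX : Type} (mul : T -> T -> T) (one : T)
  (act : T -> X -> option X) (iota : X -> XX) (gact : T -> XX -> XX) : Prop :=
  (forall x y, iota x = iota y -> x = y) /\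
  is_action mul one gact /\
  (forall t x, (exists y, act t x = Some y) <-> (exists y, gact t (iota x) = iota y)) /\
  (forall t x y, act t x = Some y -> iota y = gact t (iota x)).

Definition order_embedding {X Y : Type} (leX : X -> X -> Prop) (leY : Y -> Y -> Prop)
  (f : X -> Y) : Prop := forall x y, leX x y <-> leY (f x) (f y).

Definition order_ideal {Y : Type} (leY : Y -> Y -> Prop) (A : Y -> Prop) : Prop :=
  forall a b, A b -> leY a b -> A a.

From Stdlib Require Import FunctionalExtensionality ProofIrrelevance.

(* Send x to its orbit function t |-> t.x : T -> option P.  The global space
   consists of the right translates t |-> (tu).x of such functions, with T
   acting by right translation, and is ordered pointwise with "undefined" as
   top.  Strongness gives (tu).x = t.(u.x) whenever u.x is defined, so
   translating the orbit of x by u yields the orbit of u.x, and everything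
   below an orbit function is again one. *)

Section OptionTop.
Variables (X : Type) (le : X -> X -> Prop).

Definition option_le_top (oa ob : option X) : Prop :=
  forall b, ob = Some b -> exists a, oa = Some a /\ le a b.

Hypothesis Hpo : is_poset X le.

Lemma option_le_top_refl oa : option_le_top oa oa.
Proof. intros b Hb; exists b; split; [exact Hb | apply (po_refl _ _ Hpo)]. Qed.

Lemma option_le_top_antisym oa ob :
  option_le_top oa ob -> option_le_top ob oa -> oa = ob.
Proof.
  intros Hab Hba; destruct oa as [a|], ob as [b|]; try reflexivity.
  - destruct (Hab b eq_refl) as [a' [[= <-] Hle]].
    destruct (Hba a eq_refl) as [b' [[= <-] Hle']].
    f_equal; apply (po_antisym _ _ Hpo); assumption.
  - destruct (Hba a eq_refl) as [? [? _]]; discriminate.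
  - destruct (Hab b eq_refl) as [? [? _]]; discriminate.
Qed.

Lemma option_le_top_trans oa ob oc :
  option_le_top oa ob -> option_le_top ob oc -> option_le_top oa oc.
Proof.
  intros Hab Hbc c Hc.
  destruct (Hbc c Hc) as [b [Hb Hbc']]; destruct (Hab b Hb) as [a [Ha Hab']].
  exists a; split; [exact Ha | exact (po_trans _ _ Hpo _ _ _ Hab' Hbc')].
Qed.

End OptionTop.

Arguments option_le_top {X}.

Section Globalisation.
Variables (T : Type) (mul : T -> T -> T) (one : T) (P : Type)
  (le : P -> P -> Prop) (act : T -> P -> option P).

Definition translated_orbit (g : T -> option P) : Prop :=
  exists u x, forall t, g t = act (mul t u) x.

Definition orbits : Type := {g : T -> option P | translated_orbit g}.

Definition orbits_le (f g : orbits) : Prop :=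
  forall t, option_le_top le (proj1_sig f t) (proj1_sig g t).

Lemma orbits_ext (f g : orbits) : (forall t, proj1_sig f t = proj1_sig g t) -> f = g.
Proof.
  destruct f as [f Hf], g as [g Hg]; simpl; intro Hfg.
  assert (f = g) as <- by (apply functional_extensionality; exact Hfg).
  f_equal; apply proof_irrelevance.
Qed.

Lemma orbits_le_poset : is_poset P le -> is_poset orbits orbits_le.
Proof.
  intro Hpo; split.
  - intros f t; exact (option_le_top_refl _ _ Hpo _).
  - intros f g Hfg Hgf; apply orbits_ext; intro t.
    apply (option_le_top_antisym _ _ Hpo); auto.
  - intros f g h Hfg Hgh t; apply (option_le_top_trans _ _ Hpo _ (proj1_sig g t)); auto.
Qed.

Section Monoid.
Hypothesis Hm : is_monoid T mul one.

Lemma translated_orbit_act x : translated_orbit (fun t => act t x).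
Proof. exists one, x; intro t; rewrite (mon_one_r _ _ _ Hm); reflexivity. Qed.

Definition orbit_of (x : P) : orbits := exist _ (fun t => act t x) (translated_orbit_act x).

Lemma translated_orbit_translate s (g : orbits) :
  translated_orbit (fun t => proj1_sig g (mul t s)).
Proof.
  destruct g as [g [u [x Hg]]]; exists (mul s u), x; intro t; simpl.
  rewrite Hg, (mon_assoc _ _ _ Hm); reflexivity.
Qed.

Definition translate (s : T) (g : orbits) : orbits :=
  exist _ (fun t => proj1_sig g (mul t s)) (translated_orbit_translate s g).

Lemma translate_is_action : is_action mul one translate.
Proof.
  split.
  - intro g; apply orbits_ext; intro t; simpl; rewrite (mon_one_r _ _ _ Hm); reflexivity.
  - intros s t g; apply orbits_ext; intro r; simpl; rewrite (mon_assoc _ _ _ Hm); reflexivity.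
Qed.

Lemma translate_order_preserving : order_preserving_action orbits_le translate.
Proof. intros s f g Hfg t; exact (Hfg (mul t s)). Qed.

Section PartialAction.
Hypotheses (Hpa : is_partial_action mul one act) (Hs : is_strong mul act).

Lemma act_mul_defined u x a :
  act u x = Some a -> forall t, act (mul t u) x = act t a.
Proof.
  intros Ha t; destruct (act t a) as [z|] eqn:Etz.
  - exact (proj2 Hpa _ _ _ _ _ Ha Etz).
  - destruct (act (mul t u) x) as [w|] eqn:Ew; [|reflexivity].
    destruct (Hs _ _ _ _ _ Ha Ew) as [z Hz]; congruence.
Qed.

Lemma orbit_of_at_one x : proj1_sig (orbit_of x) one = Some x.
Proof. exact (proj1 Hpa x). Qed.

Lemma orbit_of_inj x y : orbit_of x = orbit_of y -> x = y.
Proof.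
  intro Hxy; apply (f_equal (fun g => proj1_sig g one)) in Hxy.
  rewrite !orbit_of_at_one in Hxy; congruence.
Qed.

Lemma orbits_eq_orbit_of (g : orbits) a : proj1_sig g one = Some a -> g = orbit_of a.
Proof.
  destruct g as [g [u [x Hg]]]; simpl; intro Ha.
  rewrite Hg, (mon_one_l _ _ _ Hm) in Ha.
  apply orbits_ext; intro t; simpl; rewrite Hg; exact (act_mul_defined _ _ _ Ha t).
Qed.

Lemma translate_orbit_of_at_one t x : proj1_sig (translate t (orbit_of x)) one = act t x.
Proof. simpl; rewrite (mon_one_l _ _ _ Hm); reflexivity. Qed.

Lemma translate_orbit_of t x y : act t x = Some y -> translate t (orbit_of x) = orbit_of y.
Proof. intro Hy; apply orbits_eq_orbit_of; rewrite translate_orbit_of_at_one; exact Hy. Qed.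

Lemma translate_orbit_of_inv t x y : translate t (orbit_of x) = orbit_of y -> act t x = Some y.
Proof.
  intro Hy; rewrite <- translate_orbit_of_at_one, Hy; apply orbit_of_at_one.
Qed.

Lemma orbit_of_globalisation : is_globalisation mul one act orbit_of translate.
Proof.
  split; [exact orbit_of_inj | split; [exact translate_is_action | split]].
  - intros t x; split; intros [y Hy]; exists y.
    + exact (translate_orbit_of _ _ _ Hy).
    + exact (translate_orbit_of_inv _ _ _ Hy).
  - intros t x y Hy; symmetry; exact (translate_orbit_of _ _ _ Hy).
Qed.

Lemma orbit_of_order_embedding :
  order_preserving_pact le act -> order_embedding le orbits_le orbit_of.
Proof.
  intros Hop x y; split.
  - intros Hxy t b Hb; exact (Hop t x y b Hxy Hb).
  - intro Hxy; destruct (Hxy one y (orbit_of_at_one y)) as [a [Ha Hle]].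
    rewrite orbit_of_at_one in Ha; injection Ha as ->; exact Hle.
Qed.

Lemma orbit_of_image_order_ideal :
  order_ideal orbits_le (fun g => exists x, g = orbit_of x).
Proof.
  intros g f [y ->] Hgy.
  destruct (Hgy one y (orbit_of_at_one y)) as [a [Ha _]].
  exists a; exact (orbits_eq_orbit_of _ _ Ha).
Qed.

End PartialAction.
End Monoid.
End Globalisation.

Theorem mainTheorem4 (T : Type) (mul : T -> T -> T) (one : T)
  (P : Type) (le : P -> P -> Prop) (act : T -> P -> option P) :
  is_monoid T mul one ->
  is_poset P le ->
  is_partial_action mul one act ->
  is_strong mul act ->
  order_preserving_pact le act ->
  exists (PP : Type) (lePP : PP -> PP -> Prop) (iota : P -> PP) (gact : T -> PP -> PP),
    is_globalisation mul one act iota gact /\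
    is_poset PP lePP /\
    order_embedding le lePP iota /\
    order_ideal lePP (fun b => exists x, b = iota x) /\
    order_preserving_action lePP gact.
Proof.
  intros Hm Hpo Hpa Hs Hop.
  exists (orbits T mul P act), (orbits_le T mul P le act),
    (orbit_of T mul one P act Hm), (translate T mul one P act Hm).
  split; [exact (orbit_of_globalisation _ _ _ _ _ _ Hpa Hs) |].
  split; [exact (orbits_le_poset _ _ _ _ _ Hpo) |].
  split; [exact (orbit_of_order_embedding _ _ _ _ _ _ _ Hpa Hop) |].
  split; [exact (orbit_of_image_order_ideal _ _ _ _ _ _ _ Hpa Hs) |].
  exact (translate_order_preserving _ _ _ _ _ _ _).
Qed.
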